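(* Let $q$ be a power of an odd prime, $n>3$ an odd integer with $\gcd(n,q-1)=1$, $\delta\in\mathbb{F}_{q^n}^*$ with $\delta\neq1$ and multiplicative order of $\delta$ dividing $q-1$, and $0<r<n$ an integer with $\gcd(r,n)=1$. Then $S(x)=x^q+\delta x^{q^{2r+1}}$ is an exceptional scattered polynomial of index $r+1$ over $\mathbb{F}_{q^n}$.
   Context: For a polynomial $S$ with coefficients in $\mathbb{F}_{q^n}$, a positive integer $m$ and a nonnegative integer $t$, $S$ is scattered of index $t$ over $\mathbb{F}_{q^{mn}}$ if for all $y,z\in\mathbb{F}_{q^{mn}}^*$, $\frac{S(y)}{y^{q^t}}=\frac{S(z)}{z^{q^t}}$ implies $y/z\in\mathbb{F}_q$. $S$ is exceptional scattered of index $t$ (over $\mathbb{F}_{q^n}$) if there are infinitely many $m\in\mathbb{N}$ such that $S$ is scattered of index $t$ over $\mathbb{F}_{q^{mn}}$. *)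

From HB Require Import structures.
From mathcomp Require Import all_boot all_order all_algebra all_field.
Set Implicit Arguments. Unset Strict Implicit. Unset Printing Implicit Defensive.
Import GRing.Theory.
Local Open Scope ring_scope.

(* The polynomial S in {poly F} (F = F_{q^n}), viewed over an extension field L
   via the embedding iota : F -> L, is scattered of index t over L:
   for all y, z in L^*, S(y)/y^(q^t) = S(z)/z^(q^t) implies y/z in F_q,
   where F_q (inside L) is the fixed field of x |-> x^q. *)
Definition scattered_over (F L : fieldType) (iota : {rmorphism F -> L})
  (q t : nat) (S : {poly F}) : Prop :=
  forall y z : L, y != 0 -> z != 0 ->
    (map_poly iota S).[y] / y ^+ (q ^ t) = (map_poly iota S).[z] / z ^+ (q ^ t) ->
    (y / z) ^+ q = y / z.

(* S (with coefficients in F, #|F| = q^n) is exceptional scattered of index t: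
   for infinitely many m, S is scattered of index t over F_{q^{mn}}, i.e. over
   every finite field L of order q^(m n) containing (an embedded copy of) F. *)
Definition exceptional_scattered (F : finFieldType) (q n t : nat) (S : {poly F}) : Prop :=
  forall M : nat, exists m : nat, (M < m)%N /\
    forall (L : finFieldType) (iota : {rmorphism F -> L}),
      #|L| = (q ^ (m * n))%N -> scattered_over iota q t S.

From HB Require Import structures.
From mathcomp Require Import all_boot all_order all_algebra all_field.
From mathcomp Require Import ring zify.
Import GRing.Theory.
Local Open Scope ring_scope.
Set Implicit Arguments. Unset Strict Implicit.

(* Put b := y z^(q^r) - z y^(q^r).  Since x |-> x^q is additive, the equation
   S(y)/y^(q^(r+1)) = S(z)/z^(q^(r+1)) becomes b^q = delta b^(q^(r+1)).
   If b = 0, then y/z is fixed by x |-> x^(q^r) and by x |-> x^(q^(mn)); as r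
   and mn are coprime it is fixed by x |-> x^q.  If b != 0, applying the norm
   x |-> x^(1 + q + ... + q^(mn-1)) onto F_q^* gives delta^(mn) = 1, which
   together with delta^(q-1) = 1 and gcd(mn, q-1) = 1 forces delta = 1.
   It remains to pick infinitely many m coprime to r and to q-1. *)

Lemma coprime_Bezout_nat (a b : nat) : (0 < a)%N -> coprime a b ->
  exists u v : nat, (a * u = 1 + b * v)%N.
Proof.
move=> a_gt0 /eqP cop_ab; have [u v Euv _] := egcdnP b a_gt0.
by exists u, v; rewrite cop_ab in Euv; lia.
Qed.

Lemma exists_coprime_gt (c M : nat) : (0 < c)%N ->
  exists2 m : nat, (M < m)%N & coprime m c.
Proof.
move=> c_gt0; exists (M * c).+1; first by rewrite ltnS leq_pmulr.
by rewrite /coprime -addn1 gcdnC gcdnMDl gcdn1.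
Qed.

Section Exponents.

Variable R : pzSemiRingType.
Implicit Types x : R.

Lemma expr_coprime_eq1 x (a b : nat) : (0 < a)%N -> coprime a b ->
  x ^+ a = 1 -> x ^+ b = 1 -> x = 1.
Proof.
move=> a_gt0 cop_ab xa xb; have [u [v Euv]] := coprime_Bezout_nat a_gt0 cop_ab.
have : x ^+ (a * u) = 1 by rewrite exprM xa expr1n.
by rewrite Euv exprD expr1 exprM xb expr1n mulr1.
Qed.

Lemma fixed_exprXn x (q c : nat) :
  x ^+ (q ^ c) = x -> forall u, x ^+ (q ^ (c * u)) = x.
Proof.
move=> xc; elim=> [|u IHu]; first by rewrite muln0 expn0 expr1.
by rewrite mulnS expnD exprM xc IHu.
Qed.

Lemma fixed_expr_coprime x (q a b : nat) : (0 < a)%N -> coprime a b ->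
  x ^+ (q ^ a) = x -> x ^+ (q ^ b) = x -> x ^+ q = x.
Proof.
move=> a_gt0 cop_ab xa xb; have [u [v Euv]] := coprime_Bezout_nat a_gt0 cop_ab.
have := fixed_exprXn xa u; rewrite Euv expnD expn1 exprM.
by rewrite exprAC (fixed_exprXn xb v) => ->.
Qed.

Lemma expr_sum_geom x (q N : nat) :
  x ^+ q = x -> x ^+ (\sum_(i < N) q ^ i)%N = x ^+ N.
Proof.
move=> xq; have xqi i : x ^+ (q ^ i) = x.
  by elim: i => [|i IHi]; rewrite ?expr1 // expnSr exprM IHi xq.
elim: N => [|N IHN]; first by rewrite big_ord0.
by rewrite big_ord_recr /= exprD IHN xqi exprSr.
Qed.

End Exponents.

Lemma pnat_pchar_finField (L : finFieldType) (p k N : nat) :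
  prime p -> #|L| = ((p ^ k) ^ N)%N -> [pchar L].-nat (p ^ k)%N.
Proof.
move=> p_pr cardL; have [->|k_gt0] := posnP k; first by rewrite expn0.
have pL : p \in [pchar L].
  by apply: (card_finPcharP (n := (k * N)%N)) => //; rewrite cardL -expnM.
by rewrite (eq_pnat _ (pcharf_eq pL)) pnatX pnat_id.
Qed.

Definition cross_term (R : pzRingType) (s : nat) (y z : R) :=
  y * z ^+ s - z * y ^+ s.

Lemma cross_term_frobenius (R : comNzRingType) (q r : nat) (d y z : R) :
  [pchar R].-nat q ->
  let b := cross_term (q ^ r) y z in
  b ^+ q - d * b ^+ (q ^ r.+1) =
    (y ^+ q + d * y ^+ (q ^ (2 * r + 1))) * z ^+ (q ^ r.+1)
  - (z ^+ q + d * z ^+ (q ^ (2 * r + 1))) * y ^+ (q ^ r.+1).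
Proof.
move=> pq b; have pqr : [pchar R].-nat (q ^ r.+1)%N by rewrite pnatX pq.
have bq : b ^+ q = y ^+ q * z ^+ (q ^ r.+1) - z ^+ q * y ^+ (q ^ r.+1).
  by rewrite exprDn_pchar // exprNn_pchar // !exprMn -!exprM expnS mulnC.
have bqr : b ^+ (q ^ r.+1) = y ^+ (q ^ r.+1) * z ^+ (q ^ (2 * r + 1))
                           - z ^+ (q ^ r.+1) * y ^+ (q ^ (2 * r + 1)).
  rewrite exprDn_pchar // exprNn_pchar // !exprMn -!exprM -expnD.
  by rewrite addn1 mul2n -addnn addnS.
by rewrite bq bqr; ring.
Qed.

Lemma cross_term_eq0 (L : fieldType) (s : nat) (y z : L) : z != 0 ->
  cross_term s y z = 0 -> (y / z) ^+ s = y / z.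
Proof.
move=> z_neq0 /eqP; rewrite subr_eq0 => /eqP yz.
rewrite expr_div_n; apply/eqP; rewrite eqr_div ?expf_neq0 //.
by rewrite mulrC -yz mulrC.
Qed.

Section FiniteFieldNorm.

Variables (L : fieldType) (q N : nat).
Hypotheses (q_gt0 : (0 < q)%N) (frobN : forall x : L, x ^+ (q ^ N) = x).

Lemma expr_sum_geom_unity (b : L) : b != 0 ->
  (b ^+ (\sum_(i < N) q ^ i)) ^+ q.-1 = 1.
Proof.
move=> b_neq0; rewrite -exprM mulnC -predn_exp.
apply: (mulfI b_neq0); rewrite -exprS prednK ?expn_gt0 ?q_gt0 //.
by rewrite frobN mulr1.
Qed.

Lemma twisted_frobenius_eq1 (s : nat) (d b : L) : (0 < N)%N ->
  coprime N q.-1 -> d ^+ q.-1 = 1 -> b != 0 ->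
  b ^+ q = d * b ^+ (q ^ s) -> d = 1.
Proof.
move=> N_gt0 cop_Nq dq b_neq0 bq.
set e := (\sum_(i < N) q ^ i)%N; set c := b ^+ e.
have c_neq0 : c != 0 by rewrite expf_neq0.
have cq : c ^+ q = c.
  by rewrite -(prednK q_gt0) exprS expr_sum_geom_unity // mulr1.
have cqs : c ^+ (q ^ s) = c.
  by rewrite -[s]mul1n; apply: fixed_exprXn; rewrite expn1.
have de : d ^+ e = 1.
  apply: (mulIf c_neq0); rewrite mul1r.
  by rewrite -{2}cq /c exprAC bq exprMn exprAC cqs.
have dN : d ^+ N = 1.
  by rewrite -de /e expr_sum_geom // -(prednK q_gt0) exprS dq mulr1.
exact: expr_coprime_eq1 N_gt0 cop_Nq dN dq.
Qed.

End FiniteFieldNorm.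

Lemma scattered_over_finField (F L : fieldType) (iota : {rmorphism F -> L})
    (q r N : nat) (delta : F) :
  (0 < q)%N -> [pchar L].-nat q -> (forall x : L, x ^+ (q ^ N) = x) ->
  (0 < N)%N -> coprime N r -> coprime N q.-1 ->
  delta ^+ q.-1 = 1 -> delta != 1 ->
  scattered_over iota q r.+1 ('X^q + delta *: 'X^(q ^ (2 * r + 1))).
Proof.
move=> q_gt0 pq frobN N_gt0 cop_Nr cop_Nq dq d_neq1 y z y_neq0 z_neq0.
rewrite rmorphD /= map_polyZ !map_polyXn !hornerE.
move/eqP; rewrite eqr_div ?expf_neq0 // => /eqP Syz.
have := @cross_term_frobenius _ q r (iota delta) y z pq.
rewrite Syz subrr => /eqP; rewrite subr_eq0 => /eqP bq.
have [b0|b_neq0] := eqVneq (cross_term (q ^ r) y z) 0.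
  exact: fixed_expr_coprime N_gt0 cop_Nr (frobN _) (cross_term_eq0 z_neq0 b0).
have iota_dq : iota delta ^+ q.-1 = 1 by rewrite -rmorphXn dq rmorph1.
have := twisted_frobenius_eq1 q_gt0 frobN N_gt0 cop_Nq iota_dq b_neq0 bq.
by move/eqP; rewrite fmorph_eq1 (negPf d_neq1).
Qed.

Theorem mainTheorem14 (p k q n r : nat) (F : finFieldType) (delta : F) :
  prime p -> odd p -> (0 < k)%N -> q = (p ^ k)%N ->
  (3 < n)%N -> odd n -> gcdn n q.-1 = 1%N ->
  #|F| = (q ^ n)%N ->
  delta != 0 -> delta != 1 -> delta ^+ q.-1 = 1 ->
  (0 < r)%N -> (r < n)%N -> gcdn r n = 1%N ->
  exceptional_scattered q n r.+1 ('X^q + delta *: 'X^(q ^ (2 * r + 1))).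
Proof.
move=> p_pr _ k_gt0 -> n_gt3 _ cop_nq _ _ d_neq1 dq r_gt0 _ cop_rn M.
have q_gt1 : (1 < p ^ k)%N by rewrite -(expn0 p) ltn_exp2l ?prime_gt1.
have c_gt0 : (0 < r * (p ^ k).-1)%N by rewrite muln_gt0 r_gt0 ltn_predRL.
have [m M_lt_m cop_m] := exists_coprime_gt M c_gt0.
rewrite coprimeMr in cop_m; case/andP: cop_m => cop_mr cop_mq.
exists m; split=> // L iota cardL.
apply: (scattered_over_finField (N := (m * n)%N)) dq d_neq1.
- exact: ltnW q_gt1.
- exact: pnat_pchar_finField cardL.
- by move=> x; rewrite -cardL expf_card.
- by rewrite muln_gt0 (leq_ltn_trans _ M_lt_m) // (ltn_trans _ n_gt3).
- by rewrite coprimeMl cop_mr coprime_sym /coprime cop_rn.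
- by rewrite coprimeMl cop_mq /coprime cop_nq.
Qed.
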